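(* Let $\omega\ge1$ and $n>2$ be integers, $r=2^\omega$, $R=2^{\omega n}$, and assume $n<r$. Let $p$ be a positive integer with $p<R$, let $r^{-1}$ be a positive integer with $rr^{-1}\equiv1\pmod p$, and set $p'=(rr^{-1}-1)/p$ (an integer). Let $T$ be an integer with $0\le T<pR$, and for $1\le i\le 2n$ let $T_i=\lfloor T/r^{i-1}\rfloor\bmod r$. For $1\le i\le n-2$ let $M_i\in\{0,\dots,p-1\}$ satisfy $M_i\equiv (r^{-1})^{\,n-i-1}\pmod p$, and let $H_i=M_iT_i$. Define $$T^{(n-2)}=\lfloor T/r^{n-2}\rfloor+\sum_{i=1}^{n-2}H_i,$$ and for $i=n-1,n$ define $Q_i=(T^{(i-1)}p')\bmod r$ and $T^{(i)}=(T^{(i-1)}+Q_ip)/r$. Let $U=T^{(n)}$; if $U\ge p$ replace $U$ by $U-p$; then again, if $U\ge p$ replace $U$ by $U-p$. Then all $T^{(i)}$ are integers and the final value satisfies $U=TR^{-1}\bmod p$, where $R^{-1}$ denotes an inverse of $R$ modulo $p$.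
   Context: Here $x\bmod m$ denotes the least nonnegative residue. The congruence $M_i\equiv r^{-n+i+1}\pmod p$ in the paper is interpreted with $r^{-1}$ the inverse of $r$ modulo $p$. The quantity $TR^{-1}\bmod p$ is the Montgomery reduction of $T$. *)

From mathcomp Require Import all_boot.
Set Implicit Arguments. Unset Strict Implicit. Unset Printing Implicit Defensive.

Definition Tdig (r T i : nat) : nat := (T %/ r ^ (i - 1)) %% r.

Definition montQ (r p' t : nat) : nat := (t * p') %% r.

Definition mont_step (r p p' t : nat) : nat := (t + montQ r p' t * p) %/ r.

Definition Tpre (r n T : nat) (M : nat -> nat) : nat :=
  T %/ r ^ (n - 2) + \sum_(1 <= i < n - 1) M i * Tdig r T i.

Definition csub (p U : nat) : nat := if p <= U then U - p else U.

From mathcomp Require Import all_boot.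
From mathcomp Require Import zify.

Set Implicit Arguments.
Unset Strict Implicit.
Unset Printing Implicit Defensive.

(* Since M_i * r^(n-2) = r^(i-1) (mod p), the precomputed sum folds the low
   n-2 digits of T back into place, so r^(n-2) T^(n-2) = T (mod p).  The choice
   of p' makes t + Q p divisible by r, so the two Montgomery steps divide
   T^(n-2) by r^2 modulo p, which gives T^(n) = T R^-1 (mod p).  As for size,
   n <= r keeps T^(n-2) below 2 p r^2, hence T^(n) < 3 p and two conditional
   subtractions reach the least residue. *)

Lemma Tdig_expansion r T k : 0 < r ->
  T = r ^ k * (T %/ r ^ k) + \sum_(1 <= i < k.+1) r ^ (i - 1) * Tdig r T i.
Proof.
move=> r_gt0; elim: k => [|k IHk]; first by rewrite big_geq // expn0 mul1n divn1 addn0.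
rewrite big_nat_recr //= {1}IHk.
have -> : Tdig r T k.+1 = (T %/ r ^ k) %% r by rewrite /Tdig subn1.
have -> : T %/ r ^ k = (T %/ r ^ k.+1) * r + (T %/ r ^ k) %% r.
  by rewrite {1}(divn_eq (T %/ r ^ k) r) expnSr divnMA.
rewrite modnMDl modn_mod (mulnC _ r) mulnDr mulnA -expnSr subn1 /=; lia.
Qed.

Lemma modn_sum_congr m k p (F G : nat -> nat) :
  (forall i, m <= i < k -> F i = G i %[mod p]) ->
  \sum_(m <= i < k) F i = \sum_(m <= i < k) G i %[mod p].
Proof.
move=> FG; rewrite -(modn_summ _ _ F) -(modn_summ _ _ G) !big_nat.
by congr (_ %% p); apply: eq_bigr => i /FG.
Qed.

Section MontgomeryStep.

Variables r p rinv : nat.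
Hypothesis r_gt0 : 0 < r.
Hypothesis rinv_gt0 : 0 < rinv.
Hypothesis r_rinv : r * rinv = 1 %[mod p].

Let p' := (r * rinv - 1) %/ p.

Lemma dvdn_mont_step t : r %| t + montQ r p' t * p.
Proof.
have p_dvd : p %| r * rinv - 1.
  by rewrite -eqn_mod_dvd ?muln_gt0 ?r_gt0 ?rinv_gt0 //; apply/eqP.
rewrite /dvdn /montQ -modnDmr modnMml modnDmr -mulnA divnK //.
rewrite -{1}(muln1 t) -mulnDr subnKC ?muln_gt0 ?r_gt0 ?rinv_gt0 //.
by rewrite mulnCA modnMr.
Qed.

Lemma mont_stepK t : mont_step r p p' t * r = t + montQ r p' t * p.
Proof. exact/divnK/dvdn_mont_step. Qed.

Lemma mont_step2_spec t : exists2 q, q < r ^ 2 &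
  mont_step r p p' (mont_step r p p' t) * r ^ 2 = t + q * p.
Proof.
set t1 := mont_step r p p' t.
have Q_lt s : montQ r p' s < r by rewrite ltn_pmod.
exists (montQ r p' t + montQ r p' t1 * r).
  by have := Q_lt t; have := Q_lt t1; rewrite expnS expn1; nia.
by rewrite expnS expn1 mulnA mont_stepK mulnDl mont_stepK; nia.
Qed.

Lemma mont_step2_cong t :
  mont_step r p p' (mont_step r p p' t) * r ^ 2 = t %[mod p].
Proof. by have [q _ ->] := mont_step2_spec t; rewrite addnC modnMDl. Qed.

Lemma mont_step2_lt t : t < 2 * p * r ^ 2 ->
  mont_step r p p' (mont_step r p p' t) < 3 * p.
Proof.
have [q q_lt E] := mont_step2_spec t => t_lt.
have r2_gt0 : 0 < r ^ 2 by rewrite expn_gt0 r_gt0.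
rewrite -(ltn_pmul2r r2_gt0) E.
have : q * p <= (r ^ 2 - 1) * p by apply: leq_mul => //; lia.
nia.
Qed.

End MontgomeryStep.

Section Precomputation.

Variables r n p rinv T : nat.
Variable M : nat -> nat.
Hypothesis r_gt0 : 0 < r.
Hypothesis n_gt1 : 1 < n.
Hypothesis M_spec :
  forall i, 1 <= i <= n - 2 -> M i < p /\ M i = rinv ^ (n - i - 1) %[mod p].

Lemma Tpre_cong : r * rinv = 1 %[mod p] -> r ^ (n - 2) * Tpre r n T M = T %[mod p].
Proof.
move=> r_rinv; rewrite {2}(Tdig_expansion T (n - 2) r_gt0) /Tpre mulnDr.
have -> : (n - 2).+1 = n - 1 by move: n_gt1; clear; lia.
rewrite -modnDmr -[in RHS]modnDmr; congr ((_ + _) %% p).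
rewrite big_distrr /=; apply: modn_sum_congr => i /andP[i_ge1 i_lt].
have /M_spec[_ Mi_cong] : 1 <= i <= n - 2 by move: i_ge1 i_lt; clear; lia.
have split_exp : r ^ (n - 2) = r ^ (i - 1) * r ^ (n - i - 1).
  by rewrite -expnD; congr (_ ^ _); move: i_ge1 i_lt; clear; lia.
have inv_pow : r ^ (n - i - 1) * M i = 1 %[mod p].
  by rewrite -modnMmr Mi_cong modnMmr -expnMn -modnXm r_rinv modnXm exp1n.
have fold_digit : r ^ (n - 2) * M i = r ^ (i - 1) %[mod p].
  by rewrite split_exp -mulnA -modnMmr inv_pow modnMmr muln1.
by rewrite mulnA -modnMml fold_digit modnMml.
Qed.

Lemma Tpre_lt : n - 2 <= r -> T < p * r ^ n -> Tpre r n T M < 2 * p * r ^ 2.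
Proof.
move=> n_le T_lt.
have high_lt : T %/ r ^ (n - 2) < p * r ^ 2.
  by rewrite ltn_divLR ?expn_gt0 ?r_gt0 // -mulnA -expnD addnC subnK.
have digit_lt i : Tdig r T i < r by rewrite ltn_pmod.
have sum_le : \sum_(1 <= i < n - 1) M i * Tdig r T i <= (n - 2) * (p * r).
  have -> : n - 2 = n - 1 - 1 by move: n_gt1; clear; lia.
  rewrite -sum_nat_const_nat !big_nat; apply: leq_sum => i /andP[i_ge1 i_lt].
  have /M_spec[Mi_lt _] : 1 <= i <= n - 2 by move: i_ge1 i_lt; clear; lia.
  by apply: leq_mul; apply: ltnW; [exact: Mi_lt | exact: digit_lt].
have : (n - 2) * (p * r) <= p * r ^ 2.
  by rewrite expnS expn1 mulnCA leq_mul2l leq_mul2r n_le !orbT.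
rewrite /Tpre; move: high_lt sum_le; clear; lia.
Qed.

End Precomputation.

Lemma csub_mod p x : csub p x = x %[mod p].
Proof. by rewrite /csub; case: leqP => // p_le; rewrite -{2}(subnK p_le) modnDr. Qed.

Lemma csub2_lt p x : x < 3 * p -> csub p (csub p x) < p.
Proof.
move=> x_lt; rewrite /csub.
case: (leqP p x) => [p_le | x_lt_p]; last by rewrite (leqNgt p x) x_lt_p.
by case: (leqP p (x - p)) => ?; lia.
Qed.

Lemma csub2_modn p x : x < 3 * p -> csub p (csub p x) = x %% p.
Proof. by move/csub2_lt => lt_p; rewrite -(modn_small lt_p) !csub_mod. Qed.

Theorem theorem2 (w n p rinv T Rinv : nat) (M : nat -> nat) :
  1 <= w -> 2 < n -> n < 2 ^ w ->
  0 < p -> p < 2 ^ (w * n) ->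
  0 < rinv -> 2 ^ w * rinv = 1 %[mod p] ->
  T < p * 2 ^ (w * n) ->
  (forall i, 1 <= i <= n - 2 -> M i < p /\ M i = rinv ^ (n - i - 1) %[mod p]) ->
  2 ^ (w * n) * Rinv = 1 %[mod p] ->
  let r := 2 ^ w in
  let p' := (r * rinv - 1) %/ p in
  let T0 := Tpre r n T M in
  let T1 := mont_step r p p' T0 in
  let T2 := mont_step r p p' T1 in
  let U := csub p (csub p T2) in
  r %| T0 + montQ r p' T0 * p /\
  r %| T1 + montQ r p' T1 * p /\
  U = (T * Rinv) %% p.
Proof.
move=> _ n_gt2 n_lt_r _ _ rinv_gt0 r_rinv T_lt M_spec R_Rinv r p' T0 T1 T2 U.
have r_gt0 : 0 < r by rewrite expn_gt0.
rewrite expnM -/r in T_lt R_Rinv.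
split; first exact: dvdn_mont_step.
split; first exact: dvdn_mont_step.
have n_gt1 : 1 < n by apply: ltnW.
have n_le : n - 2 <= r by rewrite leq_subLR ltnW ?ltn_addl.
have T0_lt : T0 < 2 * p * r ^ 2 := Tpre_lt r_gt0 n_gt1 M_spec n_le T_lt.
have T0_cong : r ^ (n - 2) * T0 = T %[mod p] := Tpre_cong T r_gt0 n_gt1 M_spec r_rinv.
have T2_lt : T2 < 3 * p := mont_step2_lt r_gt0 rinv_gt0 r_rinv T0_lt.
have T2_cong : T2 * r ^ 2 = T0 %[mod p] := mont_step2_cong r_gt0 rinv_gt0 r_rinv T0.
have RT2_cong : r ^ n * T2 = T %[mod p].
  have split_exp : r ^ n = r ^ (n - 2) * r ^ 2 by rewrite -expnD subnK // ltnW.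
  by rewrite split_exp -mulnA (mulnC (r ^ 2)) -modnMmr T2_cong modnMmr.
rewrite /U csub2_modn // -modnMml -RT2_cong modnMml mulnAC -modnMml R_Rinv.
by rewrite modnMml mul1n.
Qed.
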